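(* Let $G_1$ and $G_2$ be profinite-$C$ groups. Then $G_1\times G_2$ is a profinite-$C$ group.
   Context: A permutable complement of a subgroup $H$ of a group $G$ is a subgroup $K$ with $G=HK$ and $H\cap K=1$. A profinite group $G$ is a profinite-$C$ group if every closed subgroup of $G$ has a closed permutable complement in $G$. *)

From HB Require Import structures.
From mathcomp Require Import all_boot all_order all_algebra.
From mathcomp Require Import all_classical all_reals all_analysis.

Set Implicit Arguments.
Unset Strict Implicit.
Unset Printing Implicit Defensive.

Local Open Scope classical_set_scope.

Record group_ops (T : Type) := GroupOps {
  gmul : T -> T -> T;
  ginv : T -> T;
  gone : T }.

Definition is_group (T : Type) (g : group_ops T) : Prop :=
  [/\ forall x y z, gmul g x (gmul g y z) = gmul g (gmul g x y) z,
      forall x, gmul g (gone g) x = x,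
      forall x, gmul g x (gone g) = x,
      forall x, gmul g (ginv g x) x = gone g &
      forall x, gmul g x (ginv g x) = gone g].

Definition is_topological_group (T : topologicalType) (g : group_ops T) : Prop :=
  [/\ is_group g,
      continuous (fun p : T * T => gmul g p.1 p.2) &
      continuous (ginv g)].

Definition is_profinite (T : topologicalType) (g : group_ops T) : Prop :=
  [/\ is_topological_group g,
      compact [set: T],
      hausdorff_space T &
      totally_disconnected [set: T]].

Definition is_subgroup (T : Type) (g : group_ops T) (H : set T) : Prop :=
  [/\ H (gone g),
      forall x y, H x -> H y -> H (gmul g x y) &
      forall x, H x -> H (ginv g x)].

Definition is_closed_subgroup (T : topologicalType) (g : group_ops T) (H : set T) :=
  is_subgroup g H /\ closed H.

Definition permutable_complement (T : Type) (g : group_ops T) (H K : set T) : Prop :=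
  [/\ is_subgroup g K,
      (forall x : T, exists2 h, H h & exists2 k, K k & x = gmul g h k) &
      H `&` K = [set gone g]].

Definition is_profinite_C (T : topologicalType) (g : group_ops T) : Prop :=
  is_profinite g /\
  forall H : set T, is_closed_subgroup g H ->
    exists K : set T, is_closed_subgroup g K /\ permutable_complement g H K.

Definition prod_group_ops (T1 T2 : Type) (g1 : group_ops T1) (g2 : group_ops T2)
  : group_ops (T1 * T2) :=
  GroupOps (fun x y => (gmul g1 x.1 y.1, gmul g2 x.2 y.2))
           (fun x => (ginv g1 x.1, ginv g2 x.2))
           (gone g1, gone g2).

From mathcomp Require Import all_boot all_order all_algebra.
From mathcomp Require Import all_classical all_reals all_analysis.

(* Let H be a closed subgroup of G1 x G2. Its projection P to G1 is a closed
   subgroup (a compact image in a Hausdorff space), and so is its slice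
   H2 = {y | (1, y) \in H}. If K1 and K2 are closed complements of P and H2,
   then K1 x K2 is a closed complement of H: for (a, b), write a = x k1 with
   (x, y) \in H and y^-1 b = h2 k2 with h2 \in H2, so that
   (a, b) = (x, y h2) (k1, k2); and (x, y) \in H with x \in K1, y \in K2 forces
   x \in P :&: K1 = 1, then y \in H2 :&: K2 = 1. *)

Set Implicit Arguments.
Unset Strict Implicit.
Unset Printing Implicit Defensive.
Local Open Scope classical_set_scope.

Section ProductTopology.
Variables X Y : topologicalType.

Lemma fst_continuous : continuous (@fst X Y).
Proof. by move=> p; exact: cvg_fst. Qed.

Lemma snd_continuous : continuous (@snd X Y).
Proof. by move=> p; exact: cvg_snd. Qed.

Lemma pair_continuous (Z : topologicalType) (f : Z -> X) (g : Z -> Y) :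
  continuous f -> continuous g -> continuous (fun z => (f z, g z)).
Proof. by move=> fc gc z; exact: cvg_pair (fc z) (gc z). Qed.

Lemma prod_hausdorff :
  hausdorff_space X -> hausdorff_space Y -> hausdorff_space (X * Y)%type.
Proof.
move=> hX hY [p1 p2] [q1 q2] pq.
have c1 : cluster (nbhs p1) q1.
  move=> A B nA nB.
  have [[x y] [/= Ax Bx]] := pq _ _ (@fst_continuous (p1, p2) _ nA)
    (@fst_continuous (q1, q2) _ nB).
  by exists x.
have c2 : cluster (nbhs p2) q2.
  move=> A B nA nB.
  have [[x y] [/= Ay By]] := pq _ _ (@snd_continuous (p1, p2) _ nA)
    (@snd_continuous (q1, q2) _ nB).
  by exists y.
by rewrite (hX _ _ c1) (hY _ _ c2).
Qed.

Lemma totally_disconnected_setX (A : set X) (B : set Y) :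
  totally_disconnected A -> totally_disconnected B ->
  totally_disconnected (A `*` B).
Proof.
move=> tdA tdB x [Ax1 Bx2]; rewrite eqEsubset; split; last first.
  by move=> _ ->; exact: connected_component_refl.
move=> z [C [Cx CAB cC] Cz].
have proj_point (U : topologicalType) (D : set U) (pr : X * Y -> U) :
    continuous pr -> pr @` C `<=` D -> totally_disconnected D -> D (pr x) ->
    pr z = pr x.
  move=> prc CD tdD Dx; suff : pr @` C `<=` [set pr x] by apply; exists z.
  rewrite -(tdD _ Dx) => u Cu; exists (pr @` C) => //.
  by split => //; apply/(connected_continuous_connected cC)/continuous_subspaceT.
have e1 : z.1 = x.1.
  apply: proj_point tdA Ax1; first exact: fst_continuous.
  by move=> _ [u /CAB[Au _] <-].
have e2 : z.2 = x.2.
  apply: proj_point tdB Bx2; first exact: snd_continuous.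
  by move=> _ [u /CAB[_ Bu] <-].
by rewrite [z]surjective_pairing [x]surjective_pairing e1 e2.
Qed.

Lemma closed_setX (A : set X) (B : set Y) :
  closed A -> closed B -> closed (A `*` B).
Proof.
move=> cA cB; apply: closedI.
- by apply: preimage_closed => // p _; exact: fst_continuous.
- by apply: preimage_closed => // p _; exact: snd_continuous.
Qed.

Lemma closed_fst_image (A : set (X * Y)) :
  hausdorff_space X -> compact A -> closed (fst @` A).
Proof.
move=> hX cA; apply: compact_closed => //; apply: continuous_compact => //.
by apply: continuous_subspaceT; exact: fst_continuous.
Qed.

Lemma closed_slice (A : set (X * Y)) (x : X) :
  closed A -> closed [set y | A (x, y)].
Proof.
move=> cA; apply: (@preimage_closed _ _ (pair x)) => // y _.
by apply: pair_continuous => p; [exact: cvg_cst | exact: cvg_id].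
Qed.

End ProductTopology.

Lemma continuous_prod_op (X Y : topologicalType)
    (f : X * X -> X) (h : Y * Y -> Y) :
  continuous f -> continuous h ->
  continuous (fun p : (X * Y) * (X * Y) => (f (p.1.1, p.2.1), h (p.1.2, p.2.2))).
Proof.
move=> fc hc.
have pick1 : continuous (fun p : (X * Y) * (X * Y) => (p.1.1, p.2.1)).
  by apply: pair_continuous => q;
    [exact: continuous_comp (@fst_continuous _ _ q) (@fst_continuous _ _ q.1) |
     exact: continuous_comp (@snd_continuous _ _ q) (@fst_continuous _ _ q.2)].
have pick2 : continuous (fun p : (X * Y) * (X * Y) => (p.1.2, p.2.2)).
  by apply: pair_continuous => q;
    [exact: continuous_comp (@fst_continuous _ _ q) (@snd_continuous _ _ q.1) |
     exact: continuous_comp (@snd_continuous _ _ q) (@snd_continuous _ _ q.2)].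
by apply: pair_continuous => p;
  [exact: continuous_comp (pick1 p) (fc _) |
   exact: continuous_comp (pick2 p) (hc _)].
Qed.

Lemma setI_eq_set1 (T : Type) (e : T) (A B : set T) x :
  A `&` B = [set e] -> A x -> B x -> x = e.
Proof. by move=> AB Ax Bx; have : (A `&` B) x by []; rewrite AB. Qed.

Lemma ginv1 (T : Type) (g : group_ops T) :
  is_group g -> ginv g (gone g) = gone g.
Proof. by case=> _ _ mulg1 mulVg _; rewrite -[LHS]mulg1 mulVg. Qed.

Section ProductGroup.
Variables (T1 T2 : Type) (g1 : group_ops T1) (g2 : group_ops T2).
Let g := prod_group_ops g1 g2.

Lemma is_group_prod : is_group g1 -> is_group g2 -> is_group g.
Proof.
case=> mulA1 mul1g1 mulg11 mulVg1 mulgV1 [mulA2 mul1g2 mulg12 mulVg2 mulgV2].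
by split=> [x y z|[x y]|[x y]|[x y]|[x y]];
  rewrite /= ?mulA1 ?mulA2 ?mul1g1 ?mul1g2 ?mulg11 ?mulg12 ?mulVg1 ?mulVg2
          ?mulgV1 ?mulgV2.
Qed.

Lemma is_subgroup_setX (A : set T1) (B : set T2) :
  is_subgroup g1 A -> is_subgroup g2 B -> is_subgroup g (A `*` B).
Proof.
case=> A1 AM AV [B1 BM BV]; split => //.
- by move=> x y [? ?] [? ?]; split; [exact: AM | exact: BM].
- by move=> x [? ?]; split; [exact: AV | exact: BV].
Qed.

Lemma is_subgroup_fst_image (H : set (T1 * T2)) :
  is_subgroup g H -> is_subgroup g1 (fst @` H).
Proof.
case=> H1 HM HV; split.
- by exists (gone g).
- by move=> _ _ [p Hp <-] [q Hq <-]; exists (gmul g p q) => //; exact: HM.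
- by move=> _ [p Hp <-]; exists (ginv g p) => //; exact: HV.
Qed.

Lemma is_subgroup_slice1 (H : set (T1 * T2)) :
  is_group g1 -> is_subgroup g H -> is_subgroup g2 [set y | H (gone g1, y)].
Proof.
move=> G1 [H1 HM HV]; have [_ mul1g1 _ _ _] := G1; split => //.
- by move=> y y' Hy Hy'; have := HM _ _ Hy Hy'; rewrite /= mul1g1.
- by move=> y Hy; have := HV _ Hy; rewrite /= ginv1.
Qed.

Lemma permutable_complement_setX (H : set (T1 * T2)) K1 K2 :
  is_group g1 -> is_group g2 -> is_subgroup g H ->
  permutable_complement g1 (fst @` H) K1 ->
  permutable_complement g2 [set y | H (gone g1, y)] K2 ->
  permutable_complement g H (K1 `*` K2).
Proof.
move=> G1 G2 [H1 HM _] [sK1 HK1 HK1_1] [sK2 HK2 HK2_1].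
have [_ _ mulg11 _ _] := G1; have [mulA2 mul1g2 _ _ mulgV2] := G2.
split; first exact: is_subgroup_setX.
- move=> [a b]; have [_ [[x y] Hxy <-] [k1 Kk1 ->]] := HK1 a.
  have [h2 Hh2 [k2 Kk2 def_b]] := HK2 (gmul g2 (ginv g2 y) b).
  exists (gmul g (x, y) (gone g1, h2)); first exact: HM.
  exists (k1, k2) => //=.
  by rewrite mulg11 -mulA2 -def_b mulA2 mulgV2 mul1g2.
- rewrite eqEsubset; split => [[x y] [Hxy [/= Kx Ky]]|_ ->].
    have x1 : x = gone g1 by apply: setI_eq_set1 HK1_1 _ Kx; exists (x, y).
    by rewrite x1 (setI_eq_set1 HK2_1 _ Ky) // -x1.
  by split => //; split; [case: sK1 | case: sK2].
Qed.

End ProductGroup.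

Lemma is_profinite_prod (T1 T2 : topologicalType) (g1 : group_ops T1)
    (g2 : group_ops T2) :
  is_profinite g1 -> is_profinite g2 -> is_profinite (prod_group_ops g1 g2).
Proof.
case=> [[G1 m1 i1] c1 h1 td1] [[G2 m2 i2] c2 h2 td2]; split.
- split; first exact: is_group_prod.
  + exact: continuous_prod_op m1 m2.
  + by apply: pair_continuous => q;
      [exact: continuous_comp (@fst_continuous _ _ q) (i1 q.1) |
       exact: continuous_comp (@snd_continuous _ _ q) (i2 q.2)].
- by rewrite -setXTT; exact: compact_setX.
- exact: prod_hausdorff.
- by rewrite -setXTT; exact: totally_disconnected_setX.
Qed.

Theorem lemma2p3 (T1 T2 : topologicalType) (g1 : group_ops T1) (g2 : group_ops T2) :
  is_profinite_C g1 -> is_profinite_C g2 ->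
  is_profinite_C (T := (T1 * T2)%type) (prod_group_ops g1 g2).
Proof.
case=> P1 C1 [P2 C2]; split; first exact: is_profinite_prod.
have [[G1 _ _] _ h1 _] := P1; have [[G2 _ _] _ _ _] := P2.
have [_ cT _ _] := is_profinite_prod P1 P2.
move=> H [sH cH].
have [K1 [[sK1 cK1] HK1]] : exists K1, is_closed_subgroup g1 K1 /\
    permutable_complement g1 (fst @` H) K1.
  apply: C1; split; first exact: is_subgroup_fst_image sH.
  by apply: closed_fst_image => //; exact: subclosed_compact cH cT (subsetT H).
have [K2 [[sK2 cK2] HK2]] : exists K2, is_closed_subgroup g2 K2 /\
    permutable_complement g2 [set y | H (gone g1, y)] K2.
  apply: C2; split; first exact: is_subgroup_slice1 G1 sH.
  exact: closed_slice _ cH.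
exists (K1 `*` K2); split; last exact: permutable_complement_setX G1 G2 sH HK1 HK2.
by split; [exact: is_subgroup_setX sK1 sK2 | exact: closed_setX cK1 cK2].
Qed.
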